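(* Let $\mathcal{G}$ be a network of type $\mathcal{C}^1$ with exactly two stubborn agents $s_1,s_2$, whose opinions evolve by the Friedkin–Johnsen model $\mathbf{x}(k+1)=(I-\beta)W\mathbf{x}(k)+\beta\mathbf{x}(0)$. Let $(a,b,d)$ be a permissible edge modification. Suppose there exists a global communicator $m$ of $\mathcal{G}$ such that, with the sets $\mathcal{T}_1,\dots,\mathcal{T}_4$ defined relative to $m$, the nodes $a$ and $d$ satisfy at least one of the following: (1) (equally neutral) $a\in\mathcal{T}_4$ and $d\in\mathcal{T}_4$; (2) (equally supportive) $a,d\in\mathcal{T}_1$ and every simple path from $m$ to $a$ and every simple path from $m$ to $d$ passes through $s_1$; or $a,d\in\mathcal{T}_2$ and every simple path from $m$ to $a$ and every simple path from $m$ to $d$ passes through $s_2$; (3) (equally connected) there is a node $c$ such that every simple path from $s_1$ or from $s_2$ to $a$ or to $d$ passes through $c$. Then $(a,b,d)$ is redundant, i.e. the influence centralities $c_{s_1}$ and $c_{s_2}$ are the same before and after the modification.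
   Context: Let $\mathcal{G}=(\mathcal{V},\mathcal{E})$, $\mathcal{V}=\{1,\dots,n\}$, be a directed graph, where an edge $(i,j)$ means information flows from $i$ to $j$. Its weighted adjacency matrix $W=[w_{ij}]$ is row-stochastic with $w_{ij}>0$ iff $(j,i)\in\mathcal{E}$ (self-loops allowed). In the Friedkin–Johnsen model, $\beta=\mathrm{diag}(\beta_1,\dots,\beta_n)$ with $\beta_i\in[0,1]$, and agent $i$ is stubborn if $\beta_i>0$. Here exactly two agents $s_1,s_2$ are stubborn, with $\beta_{s_1},\beta_{s_2}\in(0,1)$. The influence centrality vector is $\mathbf{c}=P^T\mathbb{1}_n/n$ with $P=(I_n-(I_n-\beta)W)^{-1}\beta$; $c_i$ is the influence centrality of agent $i$ (and $c_{s_1}+c_{s_2}=1$). Type $\mathcal{C}^1$: $\mathcal{G}$ is strongly connected and some node $m$ belongs to every cycle of $\mathcal{G}$ other than self-loops; such an $m$ is a global communicator. Given a global communicator $m$, a direct path from $i$ to $j$ is a path from $i$ to $j$ that does not pass through $m$. The nodes are classified as: $\mathcal{T}_1$: nodes having a direct path from $s_1$ but not from $s_2$; $\mathcal{T}_2$: direct path from $s_2$ but not from $s_1$; $\mathcal{T}_3$: direct paths from both; $\mathcal{T}_4$: from neither. By convention $s_1\in\mathcal{T}_1$, $s_2\in\mathcal{T}_2$, $m\in\mathcal{T}_3$, except that if $s_1$ has a direct path to $s_2$ then $s_2$ and every node with a direct path from $s_2$ belong to $\mathcal{T}_3$ (so $\mathcal{T}_2=\emptyset$). Edge modification $(a,b,d)$: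 for distinct nodes $a,b,d$ with $w_{bd}>0$ and some $0<w<w_{bd}$, replace $w_{ba}$ by $w_{ba}+w$ (adding edge $(a,b)$ if absent) and $w_{bd}$ by $w_{bd}-w$, so the in-degree (row sum) of $b$ is unchanged. It is permissible if the modified network is still of type $\mathcal{C}^1$. It is redundant if it changes the influence centrality of neither stubborn agent. *)

From HB Require Import structures.
From mathcomp Require Import all_boot all_order all_algebra.
Set Implicit Arguments. Unset Strict Implicit. Unset Printing Implicit Defensive.
Import Order.TTheory GRing.Theory Num.Theory.
Local Open Scope ring_scope.

Section FJ.
Variables (R : realFieldType) (n : nat).
Implicit Types (W : 'M[R]_n) (p : seq 'I_n).

Definition row_stochastic W :=
  (forall i j, 0 <= W i j) /\ (forall i, \sum_j W i j = 1).

(* edge (i,j) of the graph: information flows from i to j, iff w_{ji} > 0 *)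
Definition fedge W : rel 'I_n := fun i j => 0 < W j i.

Definition is_walk W i j p := path (fedge W) i p && (last i p == j).

Definition simple_path W i j p := is_walk W i j p && uniq (i :: p).

Definition simple_cycle W (cy : seq 'I_n) :=
  [&& (2 <= size cy)%N, uniq cy & cycle (fedge W) cy].

Definition strongly_connected W := forall i j, exists p, is_walk W i j p.

Definition global_communicator W m :=
  forall cy, simple_cycle W cy -> m \in cy.

Definition typeC1 W :=
  strongly_connected W /\ exists m, global_communicator W m.

Definition direct_path W m i j :=
  exists p, simple_path W i j p /\ m \notin (i :: p).

Definition inT1 W m s1 s2 v :=
  v <> m /\ (v = s1 \/ (v <> s2 /\ direct_path W m s1 v /\ ~ direct_path W m s2 v)).
Definition inT2 W m s1 s2 v :=
  v <> m /\ ~ direct_path W m s1 s2 /\ v <> s1 /\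
  (v = s2 \/ (direct_path W m s2 v /\ ~ direct_path W m s1 v)).
Definition inT3 W m s1 s2 v :=
  v = m \/
  (v <> s1 /\
   ((direct_path W m s1 s2 /\ (v = s2 \/ direct_path W m s2 v)) \/
    (v <> s2 /\ direct_path W m s1 v /\ direct_path W m s2 v))).
Definition inT4 W m s1 s2 v :=
  [/\ v <> m, v <> s1, v <> s2, ~ direct_path W m s1 v & ~ direct_path W m s2 v].

Definition all_paths_through W x y z :=
  forall p, simple_path W x y p -> z \in (x :: p).

Definition equally_neutral W m s1 s2 a d :=
  inT4 W m s1 s2 a /\ inT4 W m s1 s2 d.

Definition equally_supportive W m s1 s2 a d :=
  (inT1 W m s1 s2 a /\ inT1 W m s1 s2 d /\
   all_paths_through W m a s1 /\ all_paths_through W m d s1) \/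
  (inT2 W m s1 s2 a /\ inT2 W m s1 s2 d /\
   all_paths_through W m a s2 /\ all_paths_through W m d s2).

Definition equally_connected W s1 s2 a d :=
  exists c, forall s t, (s = s1 \/ s = s2) -> (t = a \/ t = d) ->
    all_paths_through W s t c.

Definition edge_mod W a b d (w : R) : 'M[R]_n :=
  \matrix_(i, j) if i == b then
                   (if j == a then W i j + w
                    else if j == d then W i j - w else W i j)
                 else W i j.

Definition beta_mx (beta : 'I_n -> R) : 'M[R]_n := diag_mx (\row_i beta i).

Definition FJ_P W (beta : 'I_n -> R) : 'M[R]_n :=
  invmx (1%:M - (1%:M - beta_mx beta) *m W) *m beta_mx beta.

Definition influence_centrality W (beta : 'I_n -> R) i : R :=
  (\sum_j FJ_P W beta j i) / n%:R.

End FJ.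

(* The centralities are column averages of P = (I - (I - beta) W)^-1 beta, and
   P is the unique solution of (I - (I - beta) W) P = beta.  The modification
   (a, b, d) only moves weight w from column d to column a in row b of W, so it
   leaves this equation, hence P, unchanged as soon as rows a and d of P agree.
   Each of the three conditions yields a node c through which every path from
   a stubborn agent to a or to d passes.  Away from the stubborn agents the
   rows of P are W-harmonic, so on the part of the graph that c separates from
   them the difference P_u - P_c is harmonic with zero boundary values and
   vanishes by the maximum principle: P_a = P_c = P_d.  The same maximum
   principle on a strongly connected row-stochastic W shows that
   I - (I - beta) W is invertible. *)

From HB Require Import structures.
From mathcomp Require Import all_boot all_order all_algebra.
Import Order.TTheory GRing.Theory Num.Theory.
Local Open Scope ring_scope.
Set Implicit Arguments. Unset Strict Implicit. Unset Printing Implicit Defensive.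

Section Paths.
Variables (R : realFieldType) (n : nat) (W : 'M[R]_n).

Lemma all_paths_through_head s t : all_paths_through W s t s.
Proof. by move=> p _; apply: mem_head. Qed.

Lemma all_paths_through_last s t : all_paths_through W s t t.
Proof. by move=> p /andP[/andP[_ /eqP <-] _]; apply: mem_last. Qed.

Lemma not_direct_all_paths_through m s t :
  ~ direct_path W m s t -> all_paths_through W s t m.
Proof. by move=> ndir p sp; apply/negPn/negP => mNp; apply: ndir; exists p. Qed.

Lemma simple_path_suffix s t p m :
  simple_path W s t p -> m \in s :: p ->
  exists2 q, simple_path W m t q & {subset m :: q <= s :: p}.
Proof.
rewrite in_cons => sp /predU1P[->|m_p]; first by exists p.
move: sp; case/splitPr: m_p => p1 p2.
rewrite /simple_path /is_walk cat_path last_cat -cat_cons cat_uniq /=.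
case/and5P=> /andP[/and3P[_ _ wp2] lp2] _ _ mp2 up2.
exists p2; first by rewrite wp2 lp2 mp2 up2.
by move=> x x_p2; rewrite -cat_cons mem_cat x_p2 orbT.
Qed.

Lemma all_paths_through_trans s t m c :
  all_paths_through W s t m -> all_paths_through W m t c ->
  all_paths_through W s t c.
Proof.
move=> stm mtc p sp; have [q mq sub] := simple_path_suffix sp (stm p sp).
exact: sub (mtc q mq).
Qed.

Lemma all_paths_through_walk s t c p :
  all_paths_through W s t c -> is_walk W s t p -> c \in s :: p.
Proof.
move=> stc /andP[/shortenP[p' wp' up' sub'] /eqP t_def].
have /stc : simple_path W s t p'.
  by rewrite /simple_path /is_walk wp' up' t_def eqxx.
by rewrite !in_cons => /predU1P[->|/sub'->]; rewrite ?eqxx ?orbT.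
Qed.

Lemma equally_neutral_connected m s1 s2 a d :
  equally_neutral W m s1 s2 a d -> equally_connected W s1 s2 a d.
Proof.
case=> -[_ _ _ a1 a2] [_ _ _ d1 d2].
by exists m => s t [->|->] [->|->]; apply: not_direct_all_paths_through.
Qed.

Lemma equally_supportive_connected m s1 s2 a d :
  equally_supportive W m s1 s2 a d -> equally_connected W s1 s2 a d.
Proof.
case=> -[Ta [Td [mas1 mds1]]].
  exists s1 => s t [->|->] t_ad; first exact: all_paths_through_head.
  have [[_ Tt] mts1] : inT1 W m s1 s2 t /\ all_paths_through W m t s1.
    by case: t_ad => ->.
  case: Tt => [->|[_ [_ ndir]]]; first exact: all_paths_through_last.
  exact: all_paths_through_trans (not_direct_all_paths_through ndir) mts1.
exists s2 => s t [->|->] t_ad; last exact: all_paths_through_head.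
have [[_ [_ [_ Tt]]] mts2] : inT2 W m s1 s2 t /\ all_paths_through W m t s2.
  by case: t_ad => ->.
case: Tt => [->|[_ ndir]]; first exact: all_paths_through_last.
exact: all_paths_through_trans (not_direct_all_paths_through ndir) mts2.
Qed.

End Paths.

Definition fj_mx (R : realFieldType) n (W : 'M[R]_n) (beta : 'I_n -> R) :=
  1%:M - (1%:M - beta_mx beta) *m W.

Section FJSystem.
Variables (R : realFieldType) (n : nat) (W : 'M[R]_n) (beta : 'I_n -> R).

Lemma fj_mxE p (X : 'M[R]_(n, p)) i k :
  (fj_mx W beta *m X) i k = X i k - (1 - beta i) * \sum_j W i j * X j k.
Proof.
rewrite /fj_mx mulmxBl mul1mx -mulmxA /beta_mx mulmxBl mul1mx mul_diag_mx.
by rewrite !mxE mulrBl mul1r.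
Qed.

Lemma fj_mx_harmonic (P : 'M[R]_n) v k :
  fj_mx W beta *m P = beta_mx beta -> beta v = 0 ->
  P v k = \sum_j W v j * P j k.
Proof.
move=> /matrixP/(_ v k) + beta_v.
by rewrite fj_mxE /beta_mx !mxE beta_v mul0rn subr0 mul1r => /subr0_eq.
Qed.

Lemma FJ_P_fj_mx :
  fj_mx W beta \in unitmx -> fj_mx W beta *m FJ_P W beta = beta_mx beta.
Proof. by move=> unitM; rewrite /FJ_P mulKVmx. Qed.

Lemma FJ_P_unique (P : 'M[R]_n) :
  fj_mx W beta \in unitmx -> fj_mx W beta *m P = beta_mx beta ->
  FJ_P W beta = P.
Proof. by move=> unitM P_sol; rewrite -[RHS](mulKmx unitM) P_sol. Qed.

End FJSystem.

Lemma inj_unitmx (F : fieldType) n (A : 'M[F]_n) :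
  (forall x : 'cV_n, A *m x = 0 -> x = 0) -> A \in unitmx.
Proof.
move=> A_inj; rewrite -unitmx_tr -row_free_unit; apply: inj_row_free => v vA0.
apply: trmx_inj; rewrite trmx0; apply: A_inj.
by rewrite -[A]trmxK -trmx_mul vA0 trmx0.
Qed.

Section MaximumPrinciple.
Variables (R : realFieldType) (n : nat) (W : 'M[R]_n).
Hypotheses (W_stoch : row_stochastic W) (W_conn : strongly_connected W).

Section Propagation.
Variables (g f : 'I_n -> R).
Hypothesis g01 : forall v, 0 <= g v <= 1.
Hypothesis f_sub : forall v, f v = 0 \/ f v = g v * \sum_j W v j * f j.

Lemma max_norm_spread v :
  (forall j, `|f j| <= `|f v|) -> f v != 0 ->
  g v = 1 /\ forall j, 0 < W v j -> `|f j| = `|f v|.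
Proof.
move=> fv_max fv0; have [W0 W1] := W_stoch; have /andP[g0 g1] := g01 v.
set M := `|f v|; set T := \sum_j W v j * `|f j|.
have M_gt0 : 0 < M by rewrite normr_gt0.
have M_le : M <= g v * T.
  have [fv|fv] := f_sub v; first by rewrite fv eqxx in fv0.
  rewrite /M fv normrM ger0_norm // ler_wpM2l //.
  apply: le_trans (ler_norm_sum _ _ _) _; apply: ler_sum => j _.
  by rewrite normrM ger0_norm.
have T_le : T <= M.
  rewrite -[leRHS]mul1r -(W1 v) mulr_suml; apply: ler_sum => j _.
  exact: ler_wpM2l.
have T_ge0 : 0 <= T by apply: sumr_ge0 => j _; apply: mulr_ge0.
have gT_le : g v * T <= T by rewrite ler_piMl.
have TM : T = M by apply/le_anti; rewrite T_le (le_trans M_le gT_le).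
split.
  by apply/le_anti; rewrite g1 -(ler_pMl _ M_gt0) -{2}TM.
have gap0 : \sum_j W v j * (M - `|f j|) = 0.
  under eq_bigr do rewrite mulrBr.
  by rewrite sumrB -mulr_suml W1 mul1r -/T TM subrr.
have gap_ge0 j : true -> 0 <= W v j * (M - `|f j|).
  by move=> _; rewrite mulr_ge0 // subr_ge0.
move=> j Wvj; have /eqP := psumr_eq0P gap_ge0 gap0 (i := j) isT.
by rewrite mulf_eq0 gt_eqF //= subr_eq0 => /eqP.
Qed.

Lemma max_principle z : f z = 0 \/ g z < 1 -> forall v, f v = 0.
Proof.
move=> fz_g; have [u _ u_max] := @arg_maxP _ _ _ z predT (fun i => `|f i|) isT.
set M := `|f u| in u_max.
suff M0 : M = 0.
  move=> v; apply/normr0_eq0/le_anti.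
  by rewrite normr_ge0 andbT -M0; apply: u_max.
apply/eqP; rewrite eq_le normr_ge0 andbT leNgt; apply/negP => M_gt0.
have spread v : `|f v| = M -> g v = 1 /\ f v != 0 /\
    forall j, 0 < W v j -> `|f j| = M.
  move=> fvM; have fv0 : f v != 0 by rewrite -normr_gt0 fvM.
  have [|gv1 nbr] := max_norm_spread _ fv0.
    by move=> j; rewrite fvM; apply: u_max.
  by split; [|split=> // j /nbr; rewrite fvM].
(* [fedge W x y] means [0 < W y x]: maximality travels backwards along walks. *)
have back p x : path (fedge W) x p -> `|f (last x p)| = M -> `|f x| = M.
  elim: p x => [|y p IHp] x //= /andP[xy wp] /(IHp _ wp) /spread[_ [_ nbr]].
  exact: nbr.
have [p /andP[wp /eqP pu]] := W_conn z u.
have z_max : `|f z| = M by apply: (back p) => //; rewrite pu.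
have [gz1 [fz0 _]] := spread z z_max.
by case: fz_g => [fz|]; [rewrite fz eqxx in fz0 | rewrite gz1 ltxx].
Qed.

End Propagation.

Lemma harmonic_in_eq0 (B : pred 'I_n) (h : 'I_n -> R) z :
  z \notin B ->
  {in B, forall v, h v = \sum_j W v j * h j} ->
  (forall v j, v \in B -> j \notin B -> 0 < W v j -> h j = 0) ->
  {in B, forall v, h v = 0}.
Proof.
move=> zNB h_harm h_bd; have [W0 _] := W_stoch.
pose f v := if v \in B then h v else 0.
have f_harm v : f v = 0 \/ f v = 1 * \sum_j W v j * f j.
  rewrite /f; case: ifP => vB; [right | by left].
  rewrite mul1r h_harm //; apply: eq_bigr => j _.
  have /predU1P[<-|Wvj] : (0 == W v j) || (0 < W v j) by rewrite -le_eqVlt.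
    by rewrite !mul0r.
  by case: ifPn => // jNB; rewrite (h_bd v j).
have g01 (v : 'I_n) : 0 <= (1 : R) <= 1 by rewrite ler01 lexx.
move=> v vB; have := max_principle g01 f_harm (z := z) _ v.
by rewrite /f (negPf zNB) vB; apply; left.
Qed.

Lemma fj_mx_unit beta s :
  (forall i, 0 <= beta i <= 1) -> 0 < beta s -> fj_mx W beta \in unitmx.
Proof.
move=> beta01 beta_s; apply: inj_unitmx => x x_ker.
have g01 v : 0 <= 1 - beta v <= 1.
  by have /andP[b0 b1] := beta01 v; rewrite subr_ge0 b1 lerBlDr lerDl b0.
have x_sub v : x v 0 = 0 \/ x v 0 = (1 - beta v) * \sum_j W v j * x j 0.
  by right; apply/eqP; rewrite -subr_eq0 -fj_mxE x_ker mxE.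
apply/matrixP => i j; rewrite ord1 mxE.
by apply: (max_principle g01 x_sub (z := s)); right; rewrite ltrBlDr ltrDl.
Qed.

Lemma fj_mx_rows_separated beta (P : 'M[R]_n) t c :
  (forall s, beta s != 0 -> all_paths_through W s t c) ->
  fj_mx W beta *m P = beta_mx beta -> row t P = row c P.
Proof.
move=> sep P_sol; have [_ W1] := W_stoch.
(* [B] is the set of nodes other than [c] that no walk from a stubborn agent
   reaches without passing through [c]. *)
pose e := [rel x y | (x != c) && fedge W x y].
pose B := [pred u | (u != c) && ~~ [exists s, (beta s != 0) && connect e s u]].
have B_beta u : u \in B -> beta u = 0.
  by case/andP=> _ /existsPn/(_ u); rewrite connect0 andbT negbK => /eqP.
have B_exit u j : u \in B -> j \notin B -> 0 < W u j -> j = c.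
  move=> /andP[_ /existsPn uNr] jNB Wuj; apply: contraNeq jNB => jc.
  rewrite inE jc /=; apply/existsPn => s; apply: contraNN (uNr s).
  by case/andP=> -> sj; apply: connect_trans sj (connect1 _); rewrite /= jc.
have e_avoid x q : path e x q -> last x q != c -> c \notin x :: q.
  elim: q x => [|y q IHq] x /=; first by rewrite inE eq_sym.
  by case/andP=> /andP[xc _] eq_p lc; rewrite in_cons eq_sym negb_or xc IHq.
have t_B : t != c -> t \in B.
  move=> tc; rewrite inE tc /=; apply/existsPn => s.
  apply/negP => /andP[bs /connectP[p ep t_last]].
  have wp : is_walk W s t p.
    by rewrite /is_walk t_last eqxx andbT (sub_path _ ep) // => x y /andP[].
  have cNp : c \notin s :: p by apply: e_avoid; rewrite -?t_last.
  by rewrite (all_paths_through_walk (sep s bs) wp) in cNp.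
apply/rowP => k; rewrite !mxE; have [->//|tc] := eqVneq t c.
apply/eqP; rewrite -subr_eq0; apply/eqP.
apply: (harmonic_in_eq0 (h := fun u => P u k - P c k) (z := c)) (t_B tc).
- by rewrite inE eqxx.
- move=> v vB /=; rewrite (fj_mx_harmonic k P_sol (B_beta v vB)).
  under eq_bigr do rewrite mulrBr.
  by rewrite sumrB -mulr_suml W1 mul1r.
- by move=> v j vB jNB Wvj; rewrite (B_exit v j vB jNB Wvj) subrr.
Qed.

End MaximumPrinciple.

Section EdgeModification.
Variables (R : realFieldType) (n : nat) (W : 'M[R]_n) (a b d : 'I_n) (w : R).
Hypothesis ad : a != d.

Lemma edge_modE :
  edge_mod W a b d w = W + w *: (delta_mx b a - delta_mx b d).
Proof.
apply/matrixP => i j; rewrite !mxE.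
have [->|_] := eqVneq i b; last by rewrite subrr mulr0 addr0.
have [->|_] := eqVneq j a; first by rewrite (negPf ad) subr0 mulr1.
have [->|_] := eqVneq j d; last by rewrite subrr mulr0 addr0.
by rewrite sub0r mulrN1.
Qed.

Lemma edge_mod_mulmx p (X : 'M[R]_(n, p)) :
  row a X = row d X -> edge_mod W a b d w *m X = W *m X.
Proof.
move=> Xad; have deltaE x : delta_mx b x *m X = delta_mx b 0 *m row x X.
  by rewrite rowE mulmxA mul_delta_mx.
by rewrite edge_modE mulmxDl -scalemxAl mulmxBl !deltaE Xad subrr scaler0 addr0.
Qed.

Lemma row_stochastic_edge_mod :
  row_stochastic W -> 0 <= w <= W b d -> row_stochastic (edge_mod W a b d w).
Proof.
case=> W0 W1 /andP[w0 wW]; split=> [i j|i].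
  rewrite mxE; have [->|_] := eqVneq i b => //.
  case: ifP => _; first exact: addr_ge0.
  by have [->|_] := eqVneq j d; rewrite ?subr_ge0.
have rowsum (M : 'M[R]_n) : \sum_j M i j = (M *m (const_mx 1 : 'cV_n)) i 0.
  by rewrite mxE; apply: eq_bigr => j _; rewrite mxE mulr1.
by rewrite rowsum edge_mod_mulmx ?row_const // -rowsum.
Qed.

End EdgeModification.

Lemma FJ_P_edge_mod (R : realFieldType) n (W : 'M[R]_n) beta s a b d w :
  row_stochastic W -> strongly_connected W ->
  strongly_connected (edge_mod W a b d w) ->
  (forall i, 0 <= beta i <= 1) -> 0 < beta s ->
  a != d -> 0 <= w <= W b d ->
  row a (FJ_P W beta) = row d (FJ_P W beta) ->
  FJ_P (edge_mod W a b d w) beta = FJ_P W beta.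
Proof.
move=> W_st W_conn W'_conn beta01 beta_s ad w_bd P_ad.
have W'_st := row_stochastic_edge_mod ad W_st w_bd.
apply: FJ_P_unique; first exact: (fj_mx_unit W'_st W'_conn beta01 beta_s).
rewrite -[RHS](FJ_P_fj_mx (fj_mx_unit W_st W_conn beta01 beta_s)).
by rewrite /fj_mx !mulmxBl -!mulmxA edge_mod_mulmx.
Qed.

Theorem theorem1 (R : realFieldType) (n : nat) (W : 'M[R]_n)
  (beta : 'I_n -> R) (s1 s2 a b d : 'I_n) (w : R) :
  row_stochastic W ->
  typeC1 W ->
  (forall i, 0 <= beta i <= 1) ->
  s1 != s2 ->
  0 < beta s1 < 1 -> 0 < beta s2 < 1 ->
  (forall i, i != s1 -> i != s2 -> beta i = 0) ->
  a != b -> b != d -> a != d ->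
  0 < W b d -> 0 < w < W b d ->
  typeC1 (edge_mod W a b d w) ->
  (exists m, global_communicator W m /\
     (equally_neutral W m s1 s2 a d \/
      equally_supportive W m s1 s2 a d \/
      equally_connected W s1 s2 a d)) ->
  influence_centrality (edge_mod W a b d w) beta s1 = influence_centrality W beta s1 /\
  influence_centrality (edge_mod W a b d w) beta s2 = influence_centrality W beta s2.
Proof.
(* Permissibility is used only through the strong connectivity of the modified
   graph. *)
move=> W_st [W_conn _] beta01 _ /andP[beta_s1 _] _ beta0 _ _ ad _ /andP[w0 wW]
  [W'_conn _] [m [_ cond]].
have [c sep] : equally_connected W s1 s2 a d.
  case: cond => [/equally_neutral_connected //|].
  by case=> [/equally_supportive_connected|].
have stubborn s : beta s != 0 -> s = s1 \/ s = s2.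
  have [->|s_s1] := eqVneq s s1; first by left.
  have [->|s_s2] := eqVneq s s2; first by right.
  by rewrite beta0 ?eqxx.
have unitM := fj_mx_unit W_st W_conn beta01 beta_s1.
have P_c t : t = a \/ t = d -> row t (FJ_P W beta) = row c (FJ_P W beta).
  move=> t_ad; apply: (fj_mx_rows_separated W_st W_conn _ (FJ_P_fj_mx unitM)).
  by move=> s /stubborn s12; apply: sep.
have P_ad : row a (FJ_P W beta) = row d (FJ_P W beta) by rewrite !P_c; auto.
have w_bd : 0 <= w <= W b d by rewrite ltW // ltW.
have P'_P := FJ_P_edge_mod W_st W_conn W'_conn beta01 beta_s1 ad w_bd P_ad.
by rewrite /influence_centrality P'_P.
Qed.
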